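(* For every integer $r\ge0$, $\lambda\ge0$ and $y\in\mathbb{R}^n$, $$\max_{J\in\mathcal{I}:\, n\in J}\ \min_{I\in\mathcal{I}:\, n\in I,\ I\subseteq J}\Big[(P^{(|I|,r)}y_I)_n+\frac{\lambda C_{I,J}}{|I|}\Big]\le\min_{J\in\mathcal{I}:\, n\in J}\ \max_{I\in\mathcal{I}:\, n\in I,\ I\subseteq J}\Big[(P^{(|I|,r)}y_I)_n-\frac{\lambda C_{I,J}}{|I|}\Big],$$ and likewise $$\max_{J\in\mathcal{D}_n}\ \min_{I\in\mathcal{D}_n:\, I\subseteq J}\Big[(P^{(|I|,r)}y_I)_n+\frac{\lambda C_{I,J}}{|I|}\Big]\le\min_{J\in\mathcal{D}_n}\ \max_{I\in\mathcal{D}_n:\, I\subseteq J}\Big[(P^{(|I|,r)}y_I)_n-\frac{\lambda C_{I,J}}{|I|}\Big].$$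
   Context: $[n]=\{1,\dots,n\}$; an interval is $[a:b]=\{a,\dots,b\}$; $\mathcal{I}$ the set of all intervals of $[n]$. For $I=[a:b]$, $P^{(|I|,r)}$ is the orthogonal projection in $\mathbb{R}^{|I|}$ onto $\{(p(a/n),\dots,p(b/n)):p\text{ polynomial of degree}\le r\}$ and $(P^{(|I|,r)}y_I)_n$ is the last entry of $P^{(|I|,r)}y_I$ when $n\in I$. Here, for intervals $I\subseteq J$ both containing $n$: $C_{I,J}=1$ if $I\ne J$ and $C_{I,J}=-1$ if $I=J$. $\mathcal{D}_n=\{[l:n]: l\in\mathcal{L}_n\}$ where (for $n$ a power of 2, dyadic intervals being $[1:n]$ and all intervals obtained by repeated halving, forming a binary tree with singleton leaves at level $0$ and size $2^j$ at level $-j$) $\mathcal{L}_n=\{l_0,l_1,\dots\}$ with $l_0=n$, and if $l_j\ne1$ is the left endpoint of the level $-j$ dyadic interval $N$, then $l_{j+1}$ is the left endpoint of the parent of $N$ if $N$ is a right child, and the left endpoint of the dyadic interval immediately left of the parent if $N$ is a left child; stop when $l_j=1$. *)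

From HB Require Import structures.
From mathcomp Require Import all_boot all_order all_algebra.
From mathcomp Require Import reals.
From Stdlib Require Import ClassicalEpsilon.
Set Implicit Arguments. Unset Strict Implicit. Unset Printing Implicit Defensive.
Import Order.TTheory GRing.Theory Num.Theory.
Local Open Scope ring_scope.

Definition orth_proj (R : realFieldType) (k m : nat) (A : 'M[R]_(k, m))
  (v : 'rV[R]_m) : 'rV[R]_m :=
  epsilon (inhabits 0) (fun p : 'rV[R]_m => (p <= A)%MS /\ (v - p) *m A^T = 0).

(* Rows j = 0..r : the monomial t^j evaluated at the points a/n, ..., (a+m-1)/n
   (1-indexed interval [a : a+m-1]); its row space is
   {(p(a/n),...,p((a+m-1)/n)) : deg p <= r}. *)
Definition polyspan (R : realFieldType) (n a m r : nat) : 'M[R]_(r.+1, m) :=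
  \matrix_(j < r.+1, i < m) ((a + i)%:R / n%:R) ^+ j.

(* y_I for I = [a : a+m-1] (1-indexed; entry t of y : 'rV_n is y 0 (t-1)). *)
Definition restr (R : realFieldType) (n : nat) (y : 'rV[R]_n) (a m : nat) : 'rV[R]_m :=
  \row_(i < m) (if insub (a.-1 + i)%N is Some j then y 0 j else 0).

(* (P^{(|I|,r)} y_I)_b : last entry of the projection, I = [a : b], a <= b. *)
Definition Plast (R : realFieldType) (n : nat) (y : 'rV[R]_n) (r a b : nat) : R :=
  orth_proj (polyspan R n a (b - a).+1 r) (restr y a (b - a).+1) 0 (inord (b - a)).

(* C_{I,J} for I = [k : n], J = [l : n]. *)
Definition Ccoef (R : realFieldType) (k l : nat) : R := if k == l then -1 else 1.

Definition maxl (R : realFieldType) (s : seq R) : R := foldr Num.max (head 0 s) s.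
Definition minl (R : realFieldType) (s : seq R) : R := foldr Num.min (head 0 s) s.

(* Dyadic construction: a dyadic interval at level -j is indexed by i,
   [i*2^j+1 : (i+1)*2^j]. From index i at level -j the next left endpoint is
   the parent's (i odd = right child) or the left neighbour of the parent's
   (i even = left child). *)
Definition dstep (i : nat) : nat := if odd i then i./2 else (i./2).-1.

Fixpoint dyL (fuel j i : nat) : seq nat :=
  match fuel with
  | 0 => [::]
  | f.+1 => (i * 2 ^ j).+1 :: (if i == 0%N then [::] else dyL f j.+1 (dstep i))
  end.

(* L_n for n = 2^K: start with l_0 = n, i.e. index n-1 at level 0. *)
Definition Ln (K : nat) : seq nat := dyL K.+1 0 (2 ^ K).-1.

From HB Require Import structures.
From mathcomp Require Import all_boot all_order all_algebra.
From mathcomp Require Import reals.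
From mathcomp Require Import zify.
Import Order.TTheory GRing.Theory Num.Theory.
Local Open Scope ring_scope.

(* All candidate intervals end at n, so any two of them, J = [l : n] and
   J' = [l' : n], are nested and I := [maxn l l' : n] is admissible both in the
   inner minimum at J and in the inner maximum at J'.  As I is J or J', we have
   C_{I,J} + C_{I,J'} <= 0, so the penalty lam C / |I| added on the left never
   exceeds the one subtracted on the right; hence every max-min term is below
   every min-max term. *)

Section MaxlMinl.
Variable R : realFieldType.
Implicit Types (s : seq R) (x d : R).

Lemma foldr_max_mem d s : foldr Num.max d s \in d :: s.
Proof.
elim: s => [|x s IHs] /=; first exact: mem_head.
rewrite /Num.max; case: ifP => _; last by rewrite !inE eqxx orbT.
by move: IHs; rewrite !inE => /orP[->|->]; rewrite ?orbT.
Qed.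

Lemma foldr_min_mem d s : foldr Num.min d s \in d :: s.
Proof.
elim: s => [|x s IHs] /=; first exact: mem_head.
rewrite /Num.min; case: ifP => _; first by rewrite !inE eqxx orbT.
by move: IHs; rewrite !inE => /orP[->|->]; rewrite ?orbT.
Qed.

Lemma maxl_mem s : s != [::] -> maxl s \in s.
Proof.
case: s => [//|x s] _; rewrite /maxl; have := foldr_max_mem x (x :: s).
by rewrite inE => /orP[/eqP->|//]; apply: mem_head.
Qed.

Lemma minl_mem s : s != [::] -> minl s \in s.
Proof.
case: s => [//|x s] _; rewrite /minl; have := foldr_min_mem x (x :: s).
by rewrite inE => /orP[/eqP->|//]; apply: mem_head.
Qed.

Lemma maxl_ge s x : x \in s -> x <= maxl s.
Proof.
rewrite /maxl; elim: s (head 0 s) => [//|z s IHs] d /=.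
by rewrite inE le_max => /orP[/eqP->|/IHs->]; rewrite ?lexx ?orbT.
Qed.

Lemma minl_le s x : x \in s -> minl s <= x.
Proof.
rewrite /minl; elim: s (head 0 s) => [//|z s IHs] d /=.
by rewrite inE ge_min => /orP[/eqP->|/IHs->]; rewrite ?lexx ?orbT.
Qed.

Lemma maxl_minl_le_minl_maxl (T : eqType) (f g : T -> T -> R)
    (S : seq T) (F : T -> seq T) :
  (forall l l', l \in S -> l' \in S ->
     exists2 m, m \in F l /\ m \in F l' & f m l <= g m l') ->
  maxl [seq minl [seq f k l | k <- F l] | l <- S]
  <= minl [seq maxl [seq g k l | k <- F l] | l <- S].
Proof.
case: S => [|l0 S0] witness; first by rewrite /maxl /minl.
set S := l0 :: S0 in witness *.
have /mapP[l lS ->] := @maxl_mem [seq minl [seq f k l | k <- F l] | l <- S] isT.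
have /mapP[l' l'S ->] := @minl_mem [seq maxl [seq g k l | k <- F l] | l <- S] isT.
have [m [mFl mFl'] fg] := witness l l' lS l'S.
apply: le_trans (le_trans _ fg) _; first exact/minl_le/map_f.
exact/maxl_ge/map_f.
Qed.

End MaxlMinl.

Lemma mem_maxn (s : seq nat) l l' : l \in s -> l' \in s -> maxn l l' \in s.
Proof. by move=> ls l's; rewrite /maxn; case: ltnP. Qed.

Lemma Ccoef_maxn_add_le0 (R : realFieldType) (l l' : nat) :
  Ccoef R (maxn l l') l + Ccoef R (maxn l l') l' <= 0.
Proof.
rewrite /Ccoef /maxn; case: ltnP => _; rewrite eqxx; case: eqP => _;
  by rewrite ?addrN ?addNr // -opprD oppr_le0 addr_ge0.
Qed.

Lemma nested_minimax_le (R : realFieldType) (lam : R) (a d : nat -> R)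
    (S : seq nat) (F : nat -> seq nat) :
  0 <= lam -> (forall k, 0 <= d k) ->
  (forall l l', l \in S -> l' \in S -> maxn l l' \in F l) ->
  maxl [seq minl [seq a k + lam * Ccoef R k l / d k | k <- F l] | l <- S]
  <= minl [seq maxl [seq a k - lam * Ccoef R k l / d k | k <- F l] | l <- S].
Proof.
move=> lam_ge0 d_ge0 maxn_mem.
apply: maxl_minl_le_minl_maxl => l l' lS l'S.
exists (maxn l l'); first by rewrite maxn_mem // maxnC maxn_mem.
have weight_ge0 : 0 <= lam / d (maxn l l') by rewrite divr_ge0.
rewrite lerD2l (mulrAC lam (Ccoef _ _ l)) (mulrAC lam (Ccoef _ _ l')).
by rewrite -mulrN ler_wpM2l // -subr_le0 opprK Ccoef_maxn_add_le0.
Qed.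

Theorem lemma3 (R : realType) (r : nat) (lam : R) (n : nat) (y : 'rV[R]_n) :
  0 <= lam -> (0 < n)%N ->
  maxl [seq minl [seq Plast y r k n + lam * Ccoef R k l / (n - k).+1%:R
                 | k <- iota l (n - l).+1] | l <- iota 1 n]
  <= minl [seq maxl [seq Plast y r k n - lam * Ccoef R k l / (n - k).+1%:R
                    | k <- iota l (n - l).+1] | l <- iota 1 n]
  /\
  (forall K : nat, n = (2 ^ K)%N ->
   maxl [seq minl [seq Plast y r k n + lam * Ccoef R k l / (n - k).+1%:R
                  | k <- Ln K & (l <= k)%N] | l <- Ln K]
   <= minl [seq maxl [seq Plast y r k n - lam * Ccoef R k l / (n - k).+1%:R
                     | k <- Ln K & (l <= k)%N] | l <- Ln K]).
Proof.
move=> lam_ge0 _.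
pose nested_le := @nested_minimax_le R lam (fun k => Plast y r k n)
  (fun k => (n - k).+1%:R).
split=> [|K _].
  apply: nested_le => // l l'.
  by rewrite !mem_iota; lia.
apply: nested_le => // l l' lL l'L.
by rewrite mem_filter leq_maxl mem_maxn.
Qed.
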